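(* Let $p$ be a prime and $\theta=\sum_{i=j}^\infty a_iX^{-i}\in\mathbb{F}_p((X^{-1}))$, with the convention $a_1=\dots=a_{j-1}=0$ if $j>1$. Let $I$ be the $\mathbb{N}\times\mathbb{N}_0$ unit matrix over $\mathbb{F}_p$ (rows indexed by $1,2,\dots$, columns by $0,1,\dots$, with entry $1$ in row $k$ and column $k-1$ and $0$ elsewhere) and let $H(\theta)$ be the $\mathbb{N}\times\mathbb{N}_0$ Hankel matrix whose entry in row $k\geq1$ and column $l\geq0$ is $a_{k+l}$. Then the van der Corput--Kronecker-type sequence $\big((\varphi_p(n),\langle \theta n(X)\rangle|_p)\big)_{n\geq 0}$ coincides with the two-dimensional digital sequence over $\mathbb{F}_p$ generated by the matrices $C_1=I$ and $C_2=H(\theta)$.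
   Context: $\mathbb{F}_p((X^{-1}))$ is the field of formal Laurent series $\sum_{i=j}^\infty a_iX^{-i}$ over $\mathbb{F}_p$, and $\langle\sum_{i=j}^\infty a_iX^{-i}\rangle=\sum_{i\ge\max\{1,j\}}a_iX^{-i}$ is its fractional part. $\mathbb{F}_p$ is identified with $\{0,1,\dots,p-1\}$. For $n\in\mathbb{N}_0$ with base-$p$ expansion $n=n_0+n_1p+\cdots$, $n(X)=n_0+n_1X+\cdots$ and $\varphi_p(n)=\sum_{i\ge0}n_ip^{-i-1}$. For $\sum_{i\ge1}b_iX^{-i}$ over $\mathbb{F}_p$, $|_p$ means substituting $X=p$, giving $\sum_{i\ge1}b_ip^{-i}\in[0,1)$. Digital sequence: given $\mathbb{N}\times\mathbb{N}_0$ matrices $C_1,C_2$ over $\mathbb{F}_p$, for $n\ge0$ set $\vec n=(n_0,n_1,\dots,n_r,0,0,\dots)^T$ from the base-$p$ digits of $n$, compute $C_i\vec n=(y^{(i)}_1,y^{(i)}_2,\dots)^T$ modulo $p$, and set $x^{(i)}_n=\sum_{k\ge1}y^{(i)}_kp^{-k}$; the sequence is $((x_n^{(1)},x_n^{(2)}))_{n\ge0}$. *)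

From HB Require Import structures.
From mathcomp Require Import all_boot all_order all_algebra.
From mathcomp Require Import all_classical all_reals all_analysis.
Set Implicit Arguments. Unset Strict Implicit. Unset Printing Implicit Defensive.
Import Order.TTheory GRing.Theory Num.Theory.
Local Open Scope ring_scope.

Definition rsum (R : realType) (u : nat -> R) : R :=
  limn (fun N => \sum_(i < N) u i).

Definition digit (p n k : nat) : nat := (n %/ p ^ k %% p)%N.

Definition fp_val (p : nat) (x : 'F_p) : nat := nat_of_ord x.
Definition fdigit (p n k : nat) : 'F_p := (digit p n k)%:R.

Definition phi (R : realType) (p n : nat) : R :=
  rsum (fun i => (digit p n i)%:R / (p%:R) ^+ i.+1).

(* Laurent series in F_p((X^{-1})) are represented by their coefficient
   functions c : int -> F_p, c i being the coefficient of X^{-i}; such a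
   series has some lower bound v with c i = 0 for i < v. *)
Definition laurent_lb (p : nat) (c : int -> 'F_p) (v : int) : Prop :=
  forall i : int, (i < v)%R -> c i = 0.

(* Product of two Laurent series a, b with lower bounds va, vb:
   coefficient of X^{-m} is sum_{i+k=m} a_i b_k, i >= va, k >= vb. *)
Definition lmul (p : nat) (va vb : int) (a b : int -> 'F_p) : int -> 'F_p :=
  fun m => if (va + vb <= m)%R then
     \sum_(t < (absz (m - va - vb)%R).+1) a (va + t%:Z)%R * b (m - va - t%:Z)%R
   else 0.

(* n(X) = n_0 + n_1 X + ... as a Laurent series: coefficient of X^{-i}
   is n_{-i} for i <= 0, and 0 for i > 0.  Lower bound: -n. *)
Definition nX (p n : nat) : int -> 'F_p :=
  fun i => if (i <= 0)%R then fdigit p n (absz i) else 0.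

(* <b>|_p = sum_{i>=1} b_i p^{-i} (fractional part then X := p). *)
Definition frac_eval (R : realType) (p : nat) (b : int -> 'F_p) : R :=
  rsum (fun i => (fp_val (b (i.+1)%:Z))%:R / (p%:R) ^+ i.+1).

(* N x N_0 matrices over F_p: C k l, rows k >= 1 (row 0 is unused),
   columns l >= 0. *)
Definition mat (p : nat) := nat -> nat -> 'F_p.

(* y_k = (C n_vec)_k ; digits n_l vanish for l > n, so the sum is finite. *)
Definition mat_apply (p : nat) (C : mat p) (n k : nat) : 'F_p :=
  \sum_(l < n.+1) C k l * fdigit p n l.

Definition digital_coord (R : realType) (p : nat) (C : mat p) (n : nat) : R :=
  rsum (fun i => (fp_val (mat_apply C n i.+1))%:R / (p%:R) ^+ i.+1).

Definition unit_mat (p : nat) : mat p := fun k l => if k == l.+1 then 1 else 0.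

Definition hankel (p : nat) (a : int -> 'F_p) : mat p :=
  fun k l => a (k + l)%:Z.

From HB Require Import structures.
From mathcomp Require Import all_boot all_order all_algebra.
From mathcomp Require Import all_classical all_reals all_analysis.
From mathcomp Require Import zify.
Import Order.TTheory GRing.Theory Num.Theory.
Local Open Scope ring_scope.

(* The coefficient of X^-m in theta * n(X) is sum_l a_(m+l) n_l, the digits
   n_l vanishing for l > n; for m >= 1 this is exactly row m of H(theta)
   applied to the digit vector of n.  Likewise row k+1 of I picks out n_k,
   so both coordinates agree digit by digit before the substitution X = p. *)

Section Digits.

Variable p : nat.
Hypothesis p_gt1 : (1 < p)%N.

Lemma digit_eq0 n l : (n < l)%N -> digit p n l = 0%N.
Proof.
move=> n_lt_l; rewrite /digit divn_small ?mod0n //.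
apply: leq_trans (ltn_expl n p_gt1) _.
by rewrite leq_exp2l // ltnW.
Qed.

Lemma fdigit_eq0 n l : (n < l)%N -> fdigit p n l = 0.
Proof. by move=> n_lt_l; rewrite /fdigit digit_eq0. Qed.

Lemma nX_gt0 n (i : int) : 0 < i -> nX p n i = 0.
Proof. by rewrite /nX leNgt => ->. Qed.

Lemma nX_opp n (l : nat) : nX p n (- l%:Z) = fdigit p n l.
Proof. by rewrite /nX oppr_le0 abszN. Qed.

Lemma mat_apply_unit_mat n k : mat_apply (unit_mat p) n k.+1 = fdigit p n k.
Proof.
rewrite /mat_apply.
under eq_bigr => l _ do
  rewrite /unit_mat eqSS eq_sym (fun_if (fun x => x * _)) mul1r mul0r.
rewrite -big_mkcond big_ord1_eq; case: ltnP => // n_lt_k.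
by rewrite fdigit_eq0.
Qed.

End Digits.

Lemma fp_val_fdigit p n k : prime p -> fp_val (fdigit p n k) = digit p n k.
Proof. by move=> p_pr; rewrite /fp_val /fdigit val_Fp_nat // modn_mod. Qed.

Lemma mat_apply_hankel p (a : int -> 'F_p) n k :
  mat_apply (hankel a) n k = \sum_(l < n.+1) a (k%:Z + l%:Z) * fdigit p n l.
Proof. by apply: eq_bigr => l _; rewrite /hankel PoszD. Qed.

(* The summation index t of [lmul] corresponds to the digit l = t - (m - j);
   the two cases are whether the window of t starts at a digit l >= 0 or at
   some l < 0, the missing digits being matched by vanishing coefficients
   of [a] below [j]. *)
Lemma lmul_nX p (a : int -> 'F_p) (j : int) n (m : int) :
  (1 < p)%N -> laurent_lb a j ->
  lmul j (- n%:Z) a (nX p n) m = \sum_(l < n.+1) a (m + l%:Z) * fdigit p n l.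
Proof.
move=> p_gt1 a_lb; rewrite /lmul; case: ifP => [window | /negbT no_window].
  have [j_le_m | m_lt_j] := lerP j m.
    have [k ->] : exists k : nat, m = j + k%:Z by exists (absz (m - j)%R); lia.
    have -> : absz (j + k%:Z - j - - n%:Z)%R = (k + n)%N by lia.
    rewrite -addnS big_split_ord /= big1 ?add0r => [|t _]; last first.
      by rewrite nX_gt0 ?mulr0 //; have := ltn_ord t; lia.
    apply: eq_bigr => l _ /=.
    by rewrite -nX_opp; congr (a _ * nX p n _); lia.
  have [k jE] : exists k : nat, j = m + k.+1%:Z by exists (absz (j - m)%R).-1; lia.
  have [N nE] : exists N : nat, n = (k.+1 + N)%N by exists (n - k.+1)%N; lia.
  subst j.
  have -> : absz (m - (m + k.+1%:Z) - - n%:Z)%R = N by lia.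
  rewrite nE -addnS big_split_ord /= [X in _ = X + _]big1 ?add0r => [|l _]; last first.
    by rewrite a_lb ?mul0r //; have := ltn_ord l; lia.
  apply: eq_bigr => t _ /=; rewrite -nE -nX_opp.
  by congr (a _ * nX p n _); lia.
symmetry; apply: big1 => l _; rewrite a_lb ?mul0r //.
by move: no_window; have := ltn_ord l; lia.
Qed.

Theorem lemma1 (R : realType) (p : nat) (a : int -> 'F_p) (j : int) :
  prime p ->
  laurent_lb a j ->
  forall n : nat,
    (phi R p n, frac_eval R (lmul j (- (n%:Z)) a (nX p n)))
    = (digital_coord R (@unit_mat p) n, digital_coord R (hankel a) n).
Proof.
move=> p_pr a_lb n; have p_gt1 := prime_gt1 p_pr.
rewrite /phi /frac_eval /digital_coord.
congr pair; congr rsum; apply: funext => i.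
  by rewrite mat_apply_unit_mat // fp_val_fdigit.
by rewrite lmul_nX // mat_apply_hankel.
Qed.
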